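(* (a) The map $S\mapsto C(S)$ is a bijection from the set of subsets of $[n]=\{1,\dots,n\}$ to the set of chambers of $I(\mathfrak{gl}_n,V\oplus\bigwedge^2)$; in particular this arrangement has $2^n$ chambers. (b) For $S\subseteq[n]$ and $1\le\ell\le n$ let $\pi_\ell^S=|S\cap[n-\ell+1,\infty)|$ and \[ e_\ell^S=(\underbrace{1,\dots,1}_{\pi_\ell^S},\underbrace{0,\dots,0}_{n-\ell},\underbrace{-1,\dots,-1}_{\ell-\pi_\ell^S})\in\mathbb{R}^n. \] Then the extreme rays of $C(S)$ are the rays generated by $e_1^S,\dots,e_n^S$, and $e_1^S,\dots,e_n^S$ non-negatively span $C(S)$. In particular every chamber is a simplicial cone (the arrangement is simplicial).
   Context: Identify the diagonal Cartan subalgebra of $\mathfrak{gl}_n$ with $\mathbb{R}^n$ with coordinates $x_1,\dots,x_n$. Let $W=\{x_1\ge\cdots\ge x_n\}$ and $W^0=\{x_1>\cdots>x_n\}$. For $1\le i\le j\le n$ let $\lambda_{i,j}^\perp$ be the hyperplane $x_i+x_j=0$ (for $i=j$: $x_i=0$); $I(\mathfrak{gl}_n,V\oplus\bigwedge^2)$ is the arrangement of these hyperplanes restricted to $W$. Chambers are the closures of the connected components of $W^0\setminus\bigcup\lambda_{i,j}^\perp$; a face is a chamber or the intersection of a chamber with a supporting hyperplane; an extreme ray is a face that is a half-line. For $S=\{a_1>a_2>\cdots>a_k\}\subseteq[n]$, $C(S)$ is the subset of $W$ on which, for all $1\le i\le j\le n$: $x_i+x_j\ge0$ if $i\le k$ and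 $j\le i+a_i-1$, and $x_i+x_j\le0$ otherwise (equivalently, in the right-justified tableau of signs of $x_i+x_j$, row $i$ has exactly $a_i$ plus signs for $i\le k$ and none for $i>k$). *)

(* R^n is 'rV[R]_n, coordinate x_(i+1) is x ord0 i. *)
From mathcomp Require Import all_boot all_order all_algebra.
From mathcomp Require Import all_classical all_reals all_analysis.
Import numFieldNormedType.Exports.
Set Implicit Arguments. Unset Strict Implicit. Unset Printing Implicit Defensive.
Import Order.TTheory GRing.Theory Num.Theory.
Local Open Scope classical_set_scope.
Local Open Scope ring_scope.

Section Arrangement.
Variables (R : realType) (n : nat).
Local Notation vec := 'rV[R]_n.

Definition crd (x : vec) (i : 'I_n) : R := x ord0 i.

Definition Wc : set vec :=
  [set x | forall i j : 'I_n, (i <= j)%N -> crd x j <= crd x i].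
Definition W0 : set vec :=
  [set x | forall i j : 'I_n, (i < j)%N -> crd x j < crd x i].

(* hyperplane lambda_{i,j}^perp : x_i + x_j = 0 (for i = j : x_i = 0, which is
   the same as 2 x_i = 0) *)
Definition lam_perp (i j : 'I_n) : set vec := [set x | crd x i + crd x j = 0].

Definition arr_union : set vec :=
  [set x | exists i j : 'I_n, (i <= j)%N /\ lam_perp i j x].

Definition W0_compl : set vec := W0 `\` arr_union.

Definition is_chamber (K : set vec) : Prop :=
  exists2 x, W0_compl x &
    K = @closure vec (@connected_component vec W0_compl x).

(* S subset of [n] is encoded as S : {set 'I_n}, the 0-based i standing for i+1.
   desc S = [:: a_1; a_2; ...; a_k]  with a_1 > a_2 > ... > a_k (1-based values). *)
Definition desc (S : {set 'I_n}) : seq nat :=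
  sort geq [seq (val i).+1 | i <- enum S].

(* a_i for the 0-based row index i (i.e. a_{i+1}) *)
Definition aS (S : {set 'I_n}) (i : nat) : nat := nth 0%N (desc S) i.

(* C(S): for 1 <= i <= j <= n, x_i + x_j >= 0 if i <= k and j <= i + a_i - 1,
   and x_i + x_j <= 0 otherwise.  In 0-based indices i0 = i-1, j0 = j-1:
   i <= k  <->  i0 < k,   j <= i + a_i - 1  <->  j0 < i0 + a_i. *)
Definition CS (S : {set 'I_n}) : set vec :=
  [set x | Wc x /\
    forall i j : 'I_n, (i <= j)%N ->
      if ((i < #|S|)%N && (j < i + aS S i)%N)
      then 0 <= crd x i + crd x j
      else crd x i + crd x j <= 0].

Definition piS (S : {set 'I_n}) (l : nat) : nat :=
  #|[set s in S | (n - l + 1 <= (val s).+1)%N]|.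

Definition eS (S : {set 'I_n}) (l : nat) : vec :=
  \row_(m < n) (if (m < piS S l)%N then 1
                else if (m < piS S l + (n - l))%N then 0 else -1).

Definition dotv (f x : vec) : R := \sum_(i < n) crd f i * crd x i.

Definition supporting (C : set vec) (f : vec) (c : R) : Prop :=
  f != 0 /\ (forall x, C x -> dotv f x <= c) /\ (exists x, C x /\ dotv f x = c).

Definition is_face (K F : set vec) : Prop :=
  F = K \/ exists f c, supporting K f c /\ F = K `&` [set x | dotv f x = c].

Definition is_halfline (F : set vec) : Prop :=
  exists p v : vec, v != 0 /\ F = [set p + t *: v | t in [set t : R | 0 <= t]].

Definition ray (v : vec) : set vec := [set t *: v | t in [set t : R | 0 <= t]].

Definition extreme_ray (K F : set vec) : Prop := is_face K F /\ is_halfline F.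

End Arrangement.

(* For x in C(S) the coordinates decrease and the positive ones come first.  Sorting
   the absolute values |x_i| increasingly, the u-th one (0-based) comes from a positive
   coordinate exactly when u+1 is in S.  Hence C(S) is the set of x whose sorted absolute
   values, read off from fixed positions with fixed signs, are nonnegative and
   nondecreasing.  Their successive increments are linear coordinates whose dual basis is
   e_n^S, ..., e_1^S, so C(S) is the simplicial cone spanned by the e_l^S.  Its interior
   (all increments positive) avoids the hyperplanes and is a connected component of W^0
   minus them, because no increment vanishes there.  Conversely the sign tableau of a
   point off the hyperplanes defines an S whose cone contains it, and the tableau of an
   interior point of C(S) recovers S. *)

From HB Require Import structures.
From mathcomp Require Import all_boot all_order all_algebra.
From mathcomp Require Import all_classical all_reals all_analysis.
From mathcomp Require Import zify ring lra.
Import numFieldNormedType.Exports.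
Import Order.TTheory GRing.Theory Num.Theory.
Set Implicit Arguments. Unset Strict Implicit. Unset Printing Implicit Defensive.

Lemma index_sorted_geq (s : seq nat) x : sorted geq s -> uniq s -> x \in s ->
  index x s = count (ltn x) s.
Proof.
elim: s => [//|a s IH] /= srt /andP[aNs us].
have geq_trans : transitive geq by move=> b c d /= cb dc; apply: leq_trans dc cb.
have all_le : all (geq a) s by apply: order_path_min srt.
rewrite in_cons => /orP[/eqP ->|xs].
  rewrite eqxx ltnn add0n; apply/esym/eqP; rewrite -leqn0 leqNgt -has_count.
  apply/hasP => -[y ys /=]; move/allP: all_le => /(_ y ys) /= ya ay.
  by have := leq_ltn_trans ya ay; rewrite ltnn.
have xa : x != a by apply: contraNneq aNs => <-.
rewrite eq_sym (negbTE xa) IH ?(path_sorted srt) //=.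
have : x <= a by move/allP: all_le => /(_ x xs).
by rewrite leq_eqVlt (negbTE xa) /= => ->.
Qed.

Lemma count_mem_iota i m N : i <= m <= N ->
  count (fun a => i <= a < m) (iota 0 N) = m - i.
Proof.
move=> /andP[im mN].
have -> : iota 0 N = iota 0 i ++ iota i (m - i) ++ iota m (N - m).
  have eN : N = i + ((m - i) + (N - m)) by lia.
  by rewrite {1}eN !iotaD add0n subnKC.
rewrite !count_cat (@eq_in_count _ _ pred0 (iota 0 i)) => [|a]; last first.
  by rewrite mem_iota /= add0n => /ltn_geF ->.
rewrite (@eq_in_count _ _ pred0 (iota m _)) => [|a]; last first.
  by rewrite mem_iota => /andP[/leq_gtF ->]; rewrite andbF.
rewrite (@eq_in_count _ _ predT (iota i _)) => [|a]; last by rewrite mem_iota subnKC.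
by rewrite !count_pred0 count_predT size_iota addn0.
Qed.

Lemma count_segment (q : pred nat) i N :
  (forall a, q a -> i <= a < N) -> (forall a b, i <= a <= b -> q b -> q a) ->
  forall a, q a = (i <= a < i + count q (iota 0 N)).
Proof.
move=> qN q_down.
have ex : exists m, (i <= m) && ~~ q m.
  exists (maxn i N); rewrite leq_maxl /=; apply/negP => /qN /andP[_].
  by rewrite ltnNge leq_maxr.
case: (ex_minnP ex) => m /andP[im nqm] m_min.
have qE a : q a = (i <= a < m).
  apply/idP/idP => [qa|/andP[ia am]].
    have /andP[ia _] := qN _ qa; rewrite ia ltnNge; apply/negP => ma.
    by move: nqm; rewrite (q_down m a) // im ma.
  apply/negPn/negP => nqa.
  by have := m_min a; rewrite ia nqa leqNgt am => /(_ isT).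
case: (leqP i N) => iN; last first.
  have q0 a : q a = false by apply/negP => /qN; lia.
  by move=> a; rewrite q0 (eq_count q0) count_pred0 addn0; lia.
have mN : m <= N.
  by apply: m_min; rewrite iN /=; apply/negP => /qN; rewrite ltnn andbF.
by move=> a; rewrite qE (eq_count qE) count_mem_iota ?im ?mN // subnKC.
Qed.

(** * Positions of the sorted absolute values *)

Section Slots.
Variables (n : nat) (S : {set 'I_n}).

Definition memS (a : nat) : bool := [exists s in S, val s == a].

Definition cntS (a : nat) : nat := count memS (iota 0 a).

Lemma memS_val (u : 'I_n) : memS u = (u \in S).
Proof.
apply/existsP/idP => [[s /andP[sS /eqP /val_inj <-]] //|uS].
by exists u; rewrite uS eqxx.
Qed.

Lemma cntS_le a : cntS a <= a.
Proof. by rewrite /cntS (leq_trans (count_size _ _)) // size_iota. Qed.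

Lemma cntS_mono a b : a <= b -> cntS a <= cntS b <= cntS a + (b - a).
Proof.
move=> ab; rewrite /cntS -(subnKC ab) iotaD count_cat leq_addr leq_add2l /=.
by rewrite (leq_trans (count_size _ _)) // size_iota addKn.
Qed.

Lemma cntS_ord (u : 'I_n) :
  [/\ cntS u.+1 = cntS u + (u \in S), cntS u <= u & cntS u.+1 <= cntS n].
Proof.
split; last by case/andP: (cntS_mono (ltn_ord u)).
- by rewrite /cntS -addn1 iotaD count_cat /= addn0 memS_val.
- exact: cntS_le.
Qed.

Lemma card_geq_cntS m : m <= n -> #|[set s in S | m <= val s]| = cntS n - cntS m.
Proof.
move=> mn.
have -> : #|[set s in S | m <= val s]| = count (predI memS (leq m)) (iota 0 n).
  rewrite -val_enum_ord count_map cardE /enum_mem size_filter.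
  rewrite (@eq_filter _ _ predT) // filter_predT.
  by apply: eq_count => i; rewrite !inE /= memS_val.
rewrite -(subnKC mn) iotaD count_cat (@eq_in_count _ _ pred0) => [|a]; last first.
  by rewrite mem_iota /= => /ltn_geF ->; rewrite andbF.
rewrite count_pred0 /cntS iotaD count_cat add0n addKn; apply: eq_in_count => a.
by rewrite mem_iota /= => /andP[-> _]; rewrite andbT.
Qed.

Lemma card_cntS : #|S| = cntS n.
Proof.
rewrite -[RHS]subn0 -(card_geq_cntS (leq0n n)); apply: eq_card => s.
by rewrite !inE andbT.
Qed.

(* In a point of C(S), the coordinate with the (u+1)-th smallest absolute value sits at
   position [slot u]: the elements of S fill the first #|S| positions in decreasing
   order, the other indices the remaining ones in increasing order. *)
Definition slot (u : 'I_n) : nat :=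
  if u \in S then cntS n - cntS u.+1 else cntS n + u - cntS u.

Lemma slot_lt (u : 'I_n) : slot u < n.
Proof.
have /andP[? ?] := cntS_mono (ltn_ord u); have := ltn_ord u.
by rewrite /slot; case: (cntS_ord u); case: (u \in S) => /= ? ? ?; lia.
Qed.

Definition slotO (u : 'I_n) : 'I_n := Ordinal (slot_lt u).

Lemma slot_lt_card (u : 'I_n) : (slot u < #|S|) = (u \in S).
Proof.
have /andP[? ?] := cntS_mono (ltn_ord u); have := ltn_ord u.
by rewrite card_cntS /slot; case: (cntS_ord u); case: (u \in S) => /= ? ? ?; lia.
Qed.

Lemma slot_in_notin (u v : 'I_n) : u \in S -> v \notin S -> slot u < slot v.
Proof.
by move=> uS vS; rewrite (@leq_trans #|S|) ?slot_lt_card // leqNgt slot_lt_card.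
Qed.

Lemma cntS_ord2 (u v : 'I_n) : u < v ->
  [/\ cntS u.+1 = cntS u + (u \in S), cntS v.+1 = cntS v + (v \in S),
      cntS u.+1 <= cntS v <= cntS u.+1 + (v - u.+1), cntS u <= u & cntS v.+1 <= cntS n].
Proof.
move=> uv; have [h1 h2 _] := cntS_ord u; have [h3 _ h4] := cntS_ord v.
by split => //; apply: cntS_mono.
Qed.

Lemma slot_neq (u v : 'I_n) : u < v -> slot u != slot v.
Proof.
move=> uv; have := cntS_le v; rewrite /slot; case: (cntS_ord2 uv).
by case: (u \in S); case: (v \in S) => /= ? ? /andP[? ?] ? ?; lia.
Qed.

Lemma slot_inj : injective slotO.
Proof.
move=> u v /(congr1 val) /= e; apply: val_inj.
by case: (ltngtP u v) => // /slot_neq; rewrite e eqxx.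
Qed.

Lemma slot_surj (i : 'I_n) : exists u, i = slotO u.
Proof. by exists (invF slot_inj i); rewrite f_invF. Qed.

Lemma slot_leq_in (u v : 'I_n) : u \in S -> v \in S -> (slot u <= slot v) = (v <= u).
Proof.
move=> uS vS; case: (ltngtP u v) => [uv|vu|/val_inj ->]; last by rewrite leqnn.
- by case: (cntS_ord2 uv); rewrite /slot uS vS /= => ? ? /andP[? ?] ? ?; lia.
- by case: (cntS_ord2 vu); rewrite /slot uS vS /= => ? ? /andP[? ?] ? ?; lia.
Qed.

Lemma slot_leq_notin (u v : 'I_n) :
  u \notin S -> v \notin S -> (slot u <= slot v) = (u <= v).
Proof.
move=> /negbTE uS /negbTE vS; have := cntS_le u; have := cntS_le v.
case: (ltngtP u v) => [uv|vu|/val_inj ->]; last by rewrite leqnn.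
- by case: (cntS_ord2 uv); rewrite /slot uS vS /= => ? ? /andP[? ?] ? ?; lia.
- by case: (cntS_ord2 vu); rewrite /slot uS vS /= => ? ? /andP[? ?] ? ?; lia.
Qed.

Lemma size_desc : size (desc S) = #|S|.
Proof. by rewrite /desc size_sort size_map cardE. Qed.

Lemma mem_desc (s : 'I_n) : ((val s).+1 \in desc S) = (s \in S).
Proof.
rewrite /desc mem_sort; apply/mapP/idP => [[t]|sS]; last by exists s; rewrite ?mem_enum.
by rewrite mem_enum => tS [] /val_inj ->.
Qed.

Lemma aS_slot (u : 'I_n) : u \in S -> aS S (slot u) = u.+1.
Proof.
move=> uS; have mem : u.+1 \in desc S by rewrite mem_desc.
have srt : sorted geq (desc S) by apply: sort_sorted => a b; apply: leq_total.
have uq : uniq (desc S).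
  by rewrite sort_uniq map_inj_uniq ?enum_uniq // => a b /= [] /val_inj.
rewrite /aS /slot uS -(card_geq_cntS (ltn_ord u)) -[RHS](nth_index 0 mem).
congr nth; rewrite index_sorted_geq // (permP (permEl (perm_sort _ _))) count_map.
rewrite cardE /enum_mem size_filter /= count_filter; apply: eq_count => i.
by rewrite !inE andbC.
Qed.

Definition plus_sign (i j : nat) : bool := (i < #|S|) && (j < i + aS S i).

Lemma plus_sign_slot (u v : 'I_n) : slot u <= slot v ->
  plus_sign (slot u) (slot v) = (u \in S) && (v <= u).
Proof.
move=> uv; rewrite /plus_sign slot_lt_card.
case uS: (u \in S) => //=; rewrite aS_slot //.
have := ltn_ord u; have := cntS_le v.
case: (ltngtP u v) => [lt_uv|lt_vu|/val_inj <-]; last by rewrite /slot uS; lia.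
- move: uv; case: (cntS_ord2 lt_uv); rewrite /slot uS.
  by case: (v \in S) => /= ? ? /andP[? ?] ? ? ?; lia.
- move: uv; case: (cntS_ord2 lt_vu); rewrite /slot uS.
  by case: (v \in S) => /= ? ? /andP[? ?] ? ? ?; lia.
Qed.

Lemma aS_bounds i : i < #|S| -> 0 < aS S i /\ i + aS S i <= n.
Proof.
move=> iS; have i_n : i < n by rewrite (leq_trans iS) // -[leqRHS]card_ord max_card.
have [u /(congr1 val) /= ei] := slot_surj (Ordinal i_n); subst i.
have uS : u \in S by rewrite -slot_lt_card.
have /andP[_ ?] := cntS_mono (ltn_ord u); have := ltn_ord u.
by rewrite aS_slot // /slot uS; lia.
Qed.

Lemma piS_cntS l : piS S l = cntS n - cntS (n - l).
Proof.
rewrite /piS -card_geq_cntS ?leq_subr //; apply: eq_card => s.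
by rewrite !inE addn1 ltnS.
Qed.

Lemma slot_lt_cntS m (u : 'I_n) : m <= n ->
  (slot u < cntS n - cntS m) = (u \in S) && (m <= u).
Proof.
move=> mn; have /andP[? ?] := cntS_mono mn; have /andP[? ?] := cntS_mono (ltn_ord u).
have := cntS_le m; have := ltn_ord u.
rewrite /slot; case: (cntS_ord u); case: (u \in S) => /= ? ? ?;
  by case: (leqP m u) => mu; have /andP[? ?] := cntS_mono mu; lia.
Qed.

Lemma slot_lt_cntS_add m (u : 'I_n) : m <= n ->
  (slot u < cntS n - cntS m + m) = (u \in S) || (u < m).
Proof.
move=> mn; have /andP[? ?] := cntS_mono mn; have /andP[? ?] := cntS_mono (ltn_ord u).
have := cntS_le m; have := ltn_ord u.
rewrite /slot; case: (cntS_ord u); case: (u \in S) => /= ? ? ?;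
  by case: (leqP m u) => mu; have /andP[? ?] := cntS_mono mu; lia.
Qed.
End Slots.

Section PlusSignInj.
Variables (n : nat) (A B : {set 'I_n}).
Hypothesis eqAB : forall i j : 'I_n, i <= j -> plus_sign A i j = plus_sign B i j.

Lemma plus_sign_card : #|A| <= #|B|.
Proof.
rewrite leqNgt; apply/negP => BA.
have Bn : #|B| < n by rewrite (leq_trans BA) // -[leqRHS]card_ord max_card.
have [aA _] := aS_bounds BA.
have := @eqAB (Ordinal Bn) (Ordinal Bn) (leqnn _); rewrite /plus_sign /= BA ltnn.
by rewrite -{1}[#|B|]addn0 ltn_add2l aA.
Qed.

Lemma plus_sign_aS i : i < #|A| -> aS A i <= aS B i.
Proof.
move=> iA; have [aA iaA] := aS_bounds iA.
have iN : i < n by lia.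
have jn : (i + aS A i).-1 < n by lia.
have ij : i <= (i + aS A i).-1 by lia.
have := @eqAB (Ordinal iN) (Ordinal jn) ij.
rewrite /plus_sign /= iA prednK ?leqnn; last lia.
by move=> /esym /andP[_]; lia.
Qed.
End PlusSignInj.

Lemma plus_sign_inj n (A B : {set 'I_n}) :
  (forall i j : 'I_n, i <= j -> plus_sign A i j = plus_sign B i j) -> A = B.
Proof.
move=> eqAB; have eqBA (i j : 'I_n) : i <= j -> plus_sign B i j = plus_sign A i j.
  by move=> ij; rewrite eqAB.
have cAB : #|A| = #|B| by apply/eqP; rewrite eqn_leq !plus_sign_card.
have dAB : desc A = desc B.
  apply: (@eq_from_nth _ 0); first by rewrite !size_desc.
  move=> i; rewrite size_desc => iA; have iB : i < #|B| by rewrite -cAB.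
  by apply/eqP; rewrite eqn_leq (plus_sign_aS eqAB iA) (plus_sign_aS eqBA iB).
by apply/setP => s; rewrite -mem_desc dAB mem_desc.
Qed.

Local Open Scope classical_set_scope.
Local Open Scope ring_scope.

Lemma psumr_gt0 (R : numDomainType) (I : finType) (P : pred I) (F : I -> R) i :
  P i -> (forall j, P j -> 0 < F j) -> 0 < \sum_(j | P j) F j.
Proof.
move=> Pi F0; rewrite (bigD1 i) //= ltr_pwDl ?F0 // sumr_ge0 // => j /andP[Pj _].
exact/ltW/F0.
Qed.

Lemma W0_compl_sum_neq0 (R : realType) n (x : 'rV[R]_n) i j :
  W0_compl x -> crd x i + crd x j != 0.
Proof.
move=> [_ NA]; apply/eqP => e; apply: NA; case: (leqP i j) => ij; first by exists i, j.
by exists j, i; split; [exact: ltnW | rewrite /lam_perp /= addrC].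
Qed.

Lemma W0_complE (R : realType) n (x : 'rV[R]_n) : W0_compl x <->
  [/\ Wc x, injective (fun i => `|crd x i|) & forall i, crd x i != 0].
Proof.
split=> [xW|[W inj nz]].
  have [W0x _] := xW; have sum_neq0 := W0_compl_sum_neq0 _ _ xW.
  split=> [i j|i j /eqP|i].
  - by rewrite leq_eqVlt => /orP[/eqP/val_inj -> //|/W0x/ltW].
  - rewrite eqr_norm2 => /orP[/eqP e|]; last by rewrite -addr_eq0 (negbTE (sum_neq0 i j)).
    by case: (ltngtP i j) => [/W0x|/W0x|/val_inj //]; rewrite e ltxx.
  - by apply: contraNneq (sum_neq0 i i) => e; rewrite e addr0.
split=> [i j ij|[i [j [_ /eqP]]]].
  rewrite lt_neqAle (W _ _ (ltnW ij)) andbT.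
  by apply: contraTneq ij => /(congr1 Num.norm)/inj ->; rewrite ltnn.
rewrite /lam_perp /= addr_eq0 => /eqP e.
have eij : i = j by apply: inj; rewrite /= e normrN.
by move: e; rewrite eij => /eqP; rewrite -addr_eq0 -mulr2n mulrn_eq0 (negbTE (nz j)).
Qed.

Section DotProduct.
Variables (R : realType) (n : nat).
Local Notation vec := 'rV[R]_n.

Lemma dotv_is_linear (f : vec) : linear_for *%R (dotv f).
Proof.
move=> a x y; rewrite /dotv mulr_sumr -big_split; apply: eq_bigr => i _ /=.
by rewrite /crd !mxE mulrDr mulrCA.
Qed.

HB.instance Definition _ (f : vec) :=
  GRing.isLinear.Build R vec R *%R (dotv f) (dotv_is_linear f).

Lemma dotv0l (x : vec) : dotv 0 x = 0.
Proof. by rewrite /dotv big1 // => i _; rewrite /crd mxE mul0r. Qed.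

Lemma dotv_row (L : {scalar vec}) (x : vec) : dotv (\row_i L 'e_i) x = L x.
Proof.
rewrite [in RHS](row_sum_delta x) linear_sum; apply: eq_bigr => i _.
by rewrite linearZ /crd mxE mulrC.
Qed.

Lemma dotvNl (f x : vec) : dotv (- f) x = - dotv f x.
Proof. by rewrite /dotv -sumrN; apply: eq_bigr => i _; rewrite /crd mxE mulNr. Qed.

Lemma halfline_multiples (F : set vec) : is_halfline F -> F 0 ->
  exists v, (forall x, F x -> exists s, x = s *: v) /\ exists2 x, F x & x != 0.
Proof.
move=> [p [v [v0 ->]]] [r _ /eqP]; rewrite addr_eq0 => /eqP ->.
exists v; split=> [_ [t _ <-]|]; first by exists (t - r); rewrite scalerBl addrC.
case: (eqVneq r 0) => [r0|r0].
  by exists v => //; exists 1; rewrite /= ?ler01 // r0 scale0r oppr0 add0r scale1r.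
exists (- (r *: v)); last by rewrite oppr_eq0 scaler_eq0 negb_or r0.
by exists 0; rewrite /= ?scale0r ?addr0.
Qed.
End DotProduct.

(** * Coordinates adapted to C(S) *)

Section Chamber.
Variables (R : realType) (n : nat) (S : {set 'I_n}).
Local Notation vec := 'rV[R]_n.
Local Notation gen l := (eS R S (nat_of_ord l).+1).

(* On C(S), [sabs u x] is the (u+1)-th smallest absolute value of the coordinates of x. *)
Definition sabs (u : 'I_n) (x : vec) : R :=
  (if u \in S then 1 else -1) * crd x (slotO S u).

Lemma sabs_is_linear u : linear_for *%R (sabs u).
Proof. by move=> a x y; rewrite /sabs /crd !mxE mulrDr mulrCA. Qed.

HB.instance Definition _ u :=
  GRing.isLinear.Build R vec R *%R (sabs u) (sabs_is_linear u).

Lemma crd_slot x u : crd x (slotO S u) = if u \in S then sabs u x else - sabs u x.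
Proof. by rewrite /sabs; case: (u \in S); rewrite ?mul1r ?mulN1r ?opprK. Qed.

Lemma abs_crd_slot x u : `|crd x (slotO S u)| = `|sabs u x|.
Proof. by rewrite crd_slot; case: (u \in S); rewrite ?normrN. Qed.

Lemma sabs_inj x z : (forall u, sabs u x = sabs u z) -> x = z.
Proof.
move=> h; apply/rowP => i; have [u ->] := slot_surj S i.
have := h u; rewrite /sabs /crd; case: (u \in S) => /= /mulfI; apply.
  exact: oner_neq0.
by rewrite oppr_eq0 oner_eq0.
Qed.

Lemma sabs_gen (l u : 'I_n) : sabs u (gen l) = (rev_ord l <= u)%:R.
Proof.
have mn : (n - l.+1 <= n)%N by exact: leq_subr.
rewrite /sabs /crd /eS mxE piS_cntS /= slot_lt_cntS // slot_lt_cntS_add //.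
case: (u \in S); case: (leqP (n - l.+1) u) => _ /=; rewrite ?mulr1 ?mulr0 //.
by rewrite mulrN1 opprK.
Qed.

Definition ord_prev (w : 'I_n) : 'I_n := Ordinal (leq_ltn_trans (leq_pred w) (ltn_ord w)).

Definition gap (w : 'I_n) (x : vec) : R :=
  sabs w x - (if (0 < w)%N then sabs (ord_prev w) x else 0).

Lemma gap_is_linear w : linear_for *%R (gap w).
Proof.
move=> a x y; rewrite /gap !linearP /=.
by case: (0 < w)%N => /=; ring.
Qed.

HB.instance Definition _ w :=
  GRing.isLinear.Build R vec R *%R (gap w) (gap_is_linear w).

(* The coordinate along e_(l+1)^S, whose sorted absolute values jump at n - l - 1. *)
Definition ecoef (l : 'I_n) : vec -> R := gap (rev_ord l).

HB.instance Definition _ l := GRing.Linear.copy (ecoef l) (gap (rev_ord l)).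

Lemma gap_gen (w l : 'I_n) : gap w (gen l) = (rev_ord l == w)%:R.
Proof.
rewrite /gap !sabs_gen -(inj_eq val_inj) /=; case: w => -[|w] /= _.
  by rewrite leqn0 subr0.
by rewrite leq_eqVlt ltnS; case: eqP => [->|_] /=; rewrite ?ltnn ?subr0 ?subrr.
Qed.

Lemma ecoef_gen (m l : 'I_n) : ecoef m (gen l) = (m == l)%:R.
Proof. by rewrite /ecoef gap_gen (inj_eq rev_ord_inj) eq_sym. Qed.

Lemma ecoef_comb (c : 'I_n -> R) m : ecoef m (\sum_l c l *: gen l) = c m.
Proof.
rewrite linear_sum (bigD1 m) //= big1 => [|l lm].
  by rewrite linearZ /= ecoef_gen eqxx mulr1 addr0.
by rewrite linearZ /= ecoef_gen eq_sym (negbTE lm) mulr0.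
Qed.

Lemma sabs_telescope x u : sabs u x = \sum_(w < n | (w <= u)%N) gap w x.
Proof.
case: u => k; elim: k => [|k IH] hk.
  rewrite (big_pred1 (Ordinal hk)) => [|w]; last by rewrite /= leqn0 -(inj_eq val_inj).
  by rewrite /gap subr0.
have hk' : (k < n)%N := ltnW hk.
rewrite (bigD1 (Ordinal hk)) //= (eq_bigl (fun w : 'I_n => w <= k)%N) => [|w]; last first.
  by rewrite -(inj_eq val_inj) /= andbC -ltn_neqAle.
rewrite -(IH hk') /gap /=; have -> : ord_prev (Ordinal hk) = Ordinal hk' by exact: val_inj.
by rewrite subrK.
Qed.

Lemma sabs_sub x (u v : 'I_n) : (u <= v)%N ->
  sabs v x - sabs u x = \sum_(w < n | (u < w <= v)%N) gap w x.
Proof.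
move=> uv; rewrite !sabs_telescope (bigID (fun w : 'I_n => w <= u)%N) /=.
rewrite (eq_bigl (fun w : 'I_n => w <= u)%N) => [|w]; last first.
  by apply: andb_idl => /leq_trans; apply.
by rewrite addrAC subrr add0r; apply: eq_bigl => w; rewrite -ltnNge andbC.
Qed.

Lemma gen_decomp x : x = \sum_l ecoef l x *: gen l.
Proof.
apply: sabs_inj => u; rewrite linear_sum sabs_telescope (reindex_inj rev_ord_inj) /=.
rewrite big_mkcond; apply: eq_bigr => l _; rewrite linearZ /= sabs_gen /=.
by case: leqP; rewrite ?mulr1 ?mulr0.
Qed.

Lemma CS_slotE (x : vec) : CS S x <-> forall u v : 'I_n, (slot S u <= slot S v)%N ->
  crd x (slotO S v) <= crd x (slotO S u) /\
  (if (u \in S) && (v <= u)%N then 0 <= crd x (slotO S u) + crd x (slotO S v)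
   else crd x (slotO S u) + crd x (slotO S v) <= 0).
Proof.
split=> [[W P] u v uv|slotP].
  rewrite -plus_sign_slot //; split; first exact: W.
  exact: (P (slotO S u) (slotO S v) uv).
split=> i j; have [u ->] := slot_surj S i; have [v ->] := slot_surj S j => uv.
  by case: (slotP u v uv).
by have [_] := slotP u v uv; rewrite -plus_sign_slot.
Qed.

Lemma CS_sabs (x : vec) : CS S x <->
  (forall u, 0 <= sabs u x) /\ (forall u v : 'I_n, (u <= v)%N -> sabs u x <= sabs v x).
Proof.
rewrite CS_slotE; split => [CSx|[ge0 mono] u v].
  split=> [u|u v uv].
    have [_] := CSx u u (leqnn _); rewrite leqnn andbT !crd_slot.
    by case: (u \in S) => /=; lra.
  case uS: (u \in S); case vS: (v \in S).
  - by have [] := CSx v u; rewrite ?slot_leq_in ?uS ?crd_slot ?uS ?vS.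
  - have [_] := CSx u v (ltnW (slot_in_notin uS (negbT vS))).
    rewrite uS !crd_slot uS vS /=; case: leqP => [vu|_]; last lra.
    have e : u = v by apply/val_inj/eqP; rewrite eqn_leq uv vu.
    by rewrite e vS in uS.
  - have [_] := CSx v u (ltnW (slot_in_notin vS (negbT uS))).
    by rewrite vS uv !crd_slot uS vS /=; lra.
  - have [] := CSx u v; first by rewrite slot_leq_notin ?uS ?vS.
    by rewrite !crd_slot uS vS; lra.
rewrite !crd_slot; case uS: (u \in S); case vS: (v \in S) => /= uv.
- have vu : (v <= u)%N by rewrite -(slot_leq_in uS vS).
  by rewrite vu; have := mono _ _ vu; have := ge0 v; lra.
- by case: leqP => [/mono|/ltnW/mono]; have := ge0 u; have := ge0 v; lra.
- by have := leq_ltn_trans uv (slot_in_notin vS (negbT uS)); rewrite ltnn.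
- have := mono u v; rewrite -(slot_leq_notin (negbT uS) (negbT vS)) => /(_ uv).
  by have := ge0 u; have := ge0 v; lra.
Qed.

Lemma CS_ecoef (x : vec) : CS S x <-> forall l, 0 <= ecoef l x.
Proof.
rewrite CS_sabs; split => [[ge0 mono] l|ecoef_ge0].
  rewrite /ecoef /gap; case: ifP => _; last by rewrite subr0.
  by rewrite subr_ge0 mono // leq_pred.
have gap_ge0 w : 0 <= gap w x by rewrite -[w]rev_ordK; exact: ecoef_ge0.
split => [u|u v uv]; first by rewrite sabs_telescope sumr_ge0.
by rewrite -subr_ge0 sabs_sub // sumr_ge0.
Qed.

Lemma sabs_strict (x : vec) : (forall l, 0 < ecoef l x) ->
  (forall u, 0 < sabs u x) /\ (forall u v : 'I_n, (u < v)%N -> sabs u x < sabs v x).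
Proof.
move=> ecoef_gt0; have gap_gt0 (P : pred 'I_n) w : P w -> 0 < gap w x.
  by rewrite -[w]rev_ordK => _; exact: ecoef_gt0.
split => [u|u v uv].
  rewrite sabs_telescope.
  exact: (@psumr_gt0 _ _ (fun w : 'I_n => w <= u)%N _ u (leqnn u) (gap_gt0 _)).
rewrite -subr_gt0 sabs_sub; last exact: ltnW.
have uvv : (u < v <= v)%N by rewrite uv leqnn.
exact: (@psumr_gt0 _ _ (fun w : 'I_n => u < w <= v)%N _ v uvv (gap_gt0 _)).
Qed.

Lemma ecoef_gt0_W0_compl (x : vec) : (forall l, 0 < ecoef l x) -> W0_compl x.
Proof.
move=> ecoef_gt0; have [pos incr] := sabs_strict ecoef_gt0.
have [W _] : CS S x by apply/CS_ecoef => l; exact: ltW.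
apply/W0_complE; split=> // [i j|i].
  have [u ->] := slot_surj S i; have [v ->] := slot_surj S j.
  rewrite /= !abs_crd_slot !gtr0_norm // => e; congr slotO.
  by case: (ltngtP u v) => [/incr|/incr|/val_inj //]; rewrite e ltxx.
by have [u ->] := slot_surj S i; rewrite -normr_gt0 abs_crd_slot gtr0_norm.
Qed.

Lemma W0_compl_ecoef_neq0 (x : vec) l : W0_compl x -> ecoef l x != 0.
Proof.
move=> /W0_complE[_ inj nz]; rewrite /ecoef /gap; set w := rev_ord l.
case: ifP => w0; last by rewrite subr0 -normr_eq0 -abs_crd_slot normr_eq0.
rewrite subr_eq0; apply/eqP => e.
have : slotO S w = slotO S (ord_prev w) by apply: inj; rewrite /= !abs_crd_slot e.
by move/slot_inj/(congr1 val); move: w0; rewrite /w /=; lia.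
Qed.

Lemma CS_cone : CS S = [set x | exists c : 'I_n -> R,
  (forall l, 0 <= c l) /\ x = \sum_(l < n) c l *: gen l].
Proof.
apply/seteqP; split => x.
  by move=> /CS_ecoef x0; exists (ecoef^~ x); split => //; exact: gen_decomp.
by move=> [c [c0 ->]]; apply/CS_ecoef => l; rewrite ecoef_comb.
Qed.

Lemma gen_free (c : 'I_n -> R) : \sum_(l < n) c l *: gen l = 0 -> forall l, c l = 0.
Proof. by move=> c0 l; rewrite -(ecoef_comb c l) c0 linear0. Qed.

Lemma CS0 : CS S (0 : vec).
Proof. by apply/CS_ecoef => l; rewrite linear0. Qed.

Lemma CSZ t (x : vec) : 0 <= t -> CS S x -> CS S (t *: x).
Proof. by move=> t0 /CS_ecoef x0; apply/CS_ecoef => l; rewrite linearZ /= mulr_ge0. Qed.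

Lemma CS_gen (l : 'I_n) : CS S (gen l).
Proof. by apply/CS_ecoef => m; rewrite ecoef_gen ler0n. Qed.

Lemma gen_neq0 (l : 'I_n) : gen l != 0.
Proof.
apply/eqP => e; have := ecoef_gen l l.
by rewrite e linear0 eqxx => /eqP; rewrite eq_sym oner_eq0.
Qed.

Lemma ray_gen (l : 'I_n) :
  ray (gen l) = [set x | CS S x /\ forall m, m != l -> ecoef m x = 0].
Proof.
apply/seteqP; split => [_ [t t0 <-]|x [/CS_ecoef x0 x1]].
  split=> [|m ml]; first exact: CSZ (CS_gen l).
  by rewrite linearZ /= ecoef_gen (negbTE ml) mulr0.
exists (ecoef l x); first exact: x0.
rewrite [RHS]gen_decomp (bigD1 l) //= big1 ?addr0 // => m ml.
by rewrite x1 ?scale0r.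
Qed.

(** * Faces and extreme rays *)

Lemma face_CSE (g : vec) : (forall x, CS S x -> dotv g x <= 0) ->
  CS S `&` [set x | dotv g x = 0] =
  [set x | CS S x /\ forall m, dotv g (gen m) != 0 -> ecoef m x = 0].
Proof.
move=> g_le; have dg_ge0 (m : 'I_n) : 0 <= - dotv g (gen m).
  by rewrite oppr_ge0; apply/g_le/CS_gen.
have dotv_decomp x : dotv g x = \sum_l ecoef l x * dotv g (gen l).
  by rewrite {1}[x]gen_decomp linear_sum; apply: eq_bigr => l _; rewrite linearZ.
apply/seteqP; split=> x [xC]; have /CS_ecoef x0 := xC.
  move=> /= gx; split=> // m dm.
  have terms_ge0 l (_ : true) : 0 <= ecoef l x * - dotv g (gen l) by rewrite mulr_ge0.
  have sum0 : \sum_l ecoef l x * - dotv g (gen l) = 0.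
    by under eq_bigr do rewrite mulrN; rewrite sumrN -dotv_decomp gx oppr0.
  have /eqP := @psumr_eq0P _ _ _ _ terms_ge0 sum0 m isT.
  by rewrite mulf_eq0 oppr_eq0 (negbTE dm) orbF => /eqP.
move=> x1; split=> //=; rewrite dotv_decomp big1 // => l _.
by case: (eqVneq (dotv g (gen l)) 0) => [->|/x1 ->]; rewrite ?mulr0 ?mul0r.
Qed.

Lemma halfline_face_ray (g : vec) : (forall x, CS S x -> dotv g x <= 0) ->
  is_halfline (CS S `&` [set x | dotv g x = 0]) ->
  exists l : 'I_n, CS S `&` [set x | dotv g x = 0] = ray (gen l).
Proof.
move=> g_le; rewrite face_CSE //; set F := [set x | _] => hF.
have F0 : F 0 by split=> [|m _]; [exact: CS0 | rewrite linear0].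
have Fgen (m : 'I_n) : dotv g (gen m) = 0 -> F (gen m).
  move=> dm; split=> [|m' dm']; first exact: CS_gen.
  by rewrite ecoef_gen; case: eqP => // em; rewrite em dm eqxx in dm'.
have [v [Fv [x1 [_ x1F] x10]]] := halfline_multiples hF F0.
have /existsP[l xl] : [exists l, ecoef l x1 != 0].
  apply: contraNT x10 => /existsPn x1_0; rewrite [x1]gen_decomp big1 // => l _.
  by rewrite (eqP (negPn (x1_0 l))) scale0r.
have dl : dotv g (gen l) = 0 by apply/eqP; apply: contraNT xl => /x1F ->.
have only_l (m : 'I_n) : m != l -> dotv g (gen m) != 0.
  move=> ml; apply/eqP => dm.
  have [sl el] := Fv _ (Fgen l dl); have [sm em] := Fv _ (Fgen m dm).
  have := ecoef_gen m m; have := ecoef_gen m l.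
  rewrite {1}el {1}em !linearZ /= eqxx (negbTE ml) => /eqP sl0 /eqP sm1.
  have vm : ecoef m v != 0 by apply: contraTneq sm1 => ->; rewrite mulr0 eq_sym oner_eq0.
  move: sl0; rewrite mulf_eq0 (negbTE vm) orbF => /eqP sl0.
  by have := gen_neq0 l; rewrite el sl0 scale0r eqxx.
exists l; rewrite ray_gen; apply/seteqP; split=> x [xC xF]; split=> // m.
  by move/only_l; exact: xF.
by move=> dm; apply: xF; apply: contraNneq dm => ->; rewrite dl.
Qed.

Definition ecoef_off (l : 'I_n) (x : vec) : R := \sum_(m | m != l) ecoef m x.

Lemma ecoef_off_is_linear l : linear_for *%R (ecoef_off l).
Proof.
move=> a x y; rewrite /ecoef_off mulr_sumr -big_split.
by apply: eq_bigr => m _; rewrite linearP.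
Qed.

HB.instance Definition _ l :=
  GRing.isLinear.Build R vec R *%R (ecoef_off l) (ecoef_off_is_linear l).

Lemma ecoef_off_eq0 l (x : vec) : CS S x ->
  (ecoef_off l x = 0 <-> forall m, m != l -> ecoef m x = 0).
Proof.
move=> /CS_ecoef x0; split=> [off0 m ml|x1]; last by rewrite /ecoef_off big1.
exact: (psumr_eq0P (fun m _ => x0 m) off0).
Qed.

Lemma ray_gen_face (l : 'I_n) : is_face (CS S) (ray (gen l)).
Proof.
rewrite ray_gen; have [[m ml]|no_m] := pselect (exists m : 'I_n, m != l); last first.
  left; apply/seteqP; split=> [x []//|x xC]; split=> // m ml.
  by case: no_m; exists m.
right; set f := - \row_i ecoef_off l 'e_i; exists f, 0.
have dotvE x : dotv f x = - ecoef_off l x by rewrite dotvNl dotv_row.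
have off_gen : ecoef_off l (gen m) = 1.
  rewrite /ecoef_off (bigD1 m) //= ecoef_gen eqxx big1 ?addr0 // => m' /andP[_].
  by rewrite ecoef_gen => /negbTE ->.
split; first split.
- apply/eqP => f0; have := dotvE (gen m); rewrite f0 dotv0l off_gen => /eqP.
  by rewrite eq_sym oppr_eq0 oner_eq0.
- split=> [x /CS_ecoef x0|]; first by rewrite dotvE oppr_le0 sumr_ge0.
  by exists 0; split; [exact: CS0 | rewrite linear0].
apply/seteqP; split=> x [xC].
  by move/(ecoef_off_eq0 l xC) => off0; split=> //=; rewrite dotvE off0 oppr0.
by rewrite /= dotvE => /eqP; rewrite oppr_eq0 => /eqP/(ecoef_off_eq0 l xC).
Qed.

Lemma supporting_CS_level (f : vec) c : supporting (CS S) f c -> c = 0.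
Proof.
move=> [_ [f_le [x0 [x0C fx0]]]].
have := f_le _ CS0; have := f_le _ (CSZ (ler0n _ 2) x0C).
rewrite linearZ linear0 /= fx0 => h2 h0; lra.
Qed.

Lemma extreme_ray_CS (F : set vec) :
  extreme_ray (CS S) F <-> exists l : 'I_n, F = ray (gen l).
Proof.
split=> [[[->|[f [c [fs ->]]]]]|[l ->]].
- have -> : CS S = CS S `&` [set x : vec | dotv 0 x = 0].
    by apply/seteqP; split=> [x xC|x []//]; split=> //=; rewrite dotv0l.
  by apply: halfline_face_ray => x _; rewrite dotv0l.
- rewrite (supporting_CS_level fs); apply: halfline_face_ray => x xC.
  by have [_ [+ _]] := fs; rewrite (supporting_CS_level fs); apply.
split; first exact: ray_gen_face.
exists 0, (gen l); split; first exact: gen_neq0.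
by apply/seteqP; split=> _ [t t0 <-]; exists t; rewrite ?add0r.
Qed.

(** * Chambers *)

Lemma sabs_continuous u : continuous (sabs u).
Proof.
move=> x; apply: (continuousM (s := fun=> _) (t := fun x : vec => x ord0 (slotO S u))).
  exact: cst_continuous.
exact: coord_continuous.
Qed.

Lemma ecoef_continuous l : continuous (ecoef l).
Proof.
move=> x; rewrite /ecoef /gap; case: (0 < _)%N.
  by apply: (continuousB (f := sabs _)); apply: sabs_continuous.
apply: (continuousB (f := sabs _) (g := fun=> 0)); first exact: sabs_continuous.
exact: cst_continuous.
Qed.

Lemma open_ecoef_gt0 l : open [set x : vec | 0 < ecoef l x].
Proof.
apply: (@open_comp _ _ (ecoef l) [set r | 0 < r]); last exact: open_gt.
by move=> x _; exact: ecoef_continuous.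
Qed.

Lemma closed_ecoef_ge0 l : closed [set x : vec | 0 <= ecoef l x].
Proof.
apply: (@preimage_closed _ _ (ecoef l) [set r | 0 <= r]); last exact: closed_ge.
by move=> x _; exact: ecoef_continuous.
Qed.

Lemma closed_CS : closed (CS S : set vec).
Proof.
have -> : CS S = \bigcap_(l in setT) [set x : vec | 0 <= ecoef l x].
  apply/seteqP; split=> [x /CS_ecoef x0 l _|x x0]; first exact: x0.
  by apply/CS_ecoef => l; exact: x0.
by apply: closed_bigI => l _; exact: closed_ecoef_ge0.
Qed.

Definition CSo : set vec := [set x | forall l, 0 < ecoef l x].

Lemma CSo_sub_CS : CSo `<=` CS S.
Proof. by move=> x x0; apply/CS_ecoef => l; exact/ltW/x0. Qed.

Lemma W0_compl_CS_CSo (x : vec) : W0_compl x -> CS S x -> CSo x.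
Proof.
move=> xW /CS_ecoef x0 l; rewrite lt_neqAle eq_sym x0 andbT.
exact: W0_compl_ecoef_neq0.
Qed.

Lemma CSo_segment (x z : vec) t : CSo x -> CSo z -> 0 <= t <= 1 ->
  CSo (x + t *: (z - x)).
Proof.
move=> x0 z0 /andP[t0 t1] l; rewrite linearD linearZ linearB /=.
by have := x0 l; have := z0 l; nra.
Qed.

Lemma line_continuous (x v : vec) : continuous (fun t : R => x + t *: v).
Proof.
move=> t; apply: (continuousD (f := fun=> x) (g := fun t : R => t *: v)).
  exact: cst_continuous.
exact: continuousZr_tmp.
Qed.

Lemma CSo_sub_component x : CSo x -> CSo `<=` connected_component (@W0_compl R n) x.
Proof.
move=> x0 z z0.
pose A := (fun t : R => x + t *: (z - x)) @` `[0, 1]%classic.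
have A_conn : connected A.
  apply: connected_continuous_connected; first exact: segment_connected.
  exact/continuous_subspaceT/line_continuous.
have A_CSo : A `<=` CSo by move=> y [t]; rewrite /= in_itv /= => t01 <-; exact: CSo_segment.
have Ax : A x by exists 0; rewrite ?scale0r ?addr0 //= in_itv /= lexx ler01.
have Az : A z by exists 1; rewrite ?scale1r 1?addrC ?subrK //= in_itv /= lexx ler01.
apply: (connected_component_max Ax) => // y /A_CSo.
exact: ecoef_gt0_W0_compl.
Qed.

Lemma component_sub_CSo x : CSo x -> connected_component (@W0_compl R n) x `<=` CSo.
Proof.
(* [ecoef l] vanishes nowhere on the component, so its sign is constant there. *)
move=> x0 z Cz l; set C := connected_component (@W0_compl R n) x.
have C_W0 : C `<=` @W0_compl R n by exact: connected_component_sub.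
have Cx : C x by apply: connected_component_refl; exact: ecoef_gt0_W0_compl.
suff eC : C `&` [set y | 0 < ecoef l y] = C by move: Cz; rewrite -/C -eC => -[].
apply: component_connected.
- by exists x; split => //; exact: x0.
- by exists [set y | 0 < ecoef l y]; [exact: open_ecoef_gt0 | ].
exists [set y | 0 <= ecoef l y]; first exact: closed_ecoef_ge0.
apply/seteqP; split => y [Cy y0]; split => //=; first exact: ltW.
by rewrite lt_neqAle eq_sym y0 andbT W0_compl_ecoef_neq0 //; exact: C_W0.
Qed.

Lemma component_CSo x : CSo x -> connected_component (@W0_compl R n) x = CSo.
Proof.
by move=> x0; apply/seteqP; split; [exact: component_sub_CSo | exact: CSo_sub_component].
Qed.

Lemma ecoef_gen_sum l : ecoef l (\sum_(m < n) gen m) = 1.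
Proof.
have := ecoef_comb (fun=> 1) l.
by under eq_bigr do rewrite scale1r.
Qed.

Lemma CSo_gen_sum : CSo (\sum_(m < n) gen m).
Proof. by move=> l; rewrite ecoef_gen_sum ltr01. Qed.

Lemma closure_CSo : closure CSo = CS S.
Proof.
apply/seteqP; split=> [y /(closureS CSo_sub_CS)|y yC B yB]; first exact: closed_CS.
pose f t := y + t *: \sum_(m < n) gen m.
have : nbhs (0 : R) (f @^-1` B) by apply: line_continuous; rewrite scale0r addr0.
move=> /nbhs_ballP [e /= e0 fB].
have e2 : ball (0 : R) e (e / 2).
  by rewrite -ball_normE /= sub0r normrN ger0_norm ?divr_ge0 ?ltW //; lra.
exists (f (e / 2)); split; last exact: fB.
move=> l; rewrite /f linearD linearZ /= ecoef_gen_sum mulr1.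
by have /CS_ecoef/(_ l) := yC; lra.
Qed.

Lemma is_chamber_CS : is_chamber (CS S : set vec).
Proof.
exists (\sum_(m < n) gen m); first exact/ecoef_gt0_W0_compl/CSo_gen_sum.
by rewrite (component_CSo CSo_gen_sum) closure_CSo.
Qed.

Lemma plus_sign_CSo (x : vec) (i j : 'I_n) : CSo x -> (i <= j)%N ->
  plus_sign S i j = (0 < crd x i + crd x j).
Proof.
move=> x0 ij; have [_ /(_ i j ij)] := CSo_sub_CS x0.
have := W0_compl_sum_neq0 i j (ecoef_gt0_W0_compl x0).
rewrite /plus_sign; case: ifP => _ s0 h; first by rewrite lt_neqAle eq_sym s0 h.
by apply/esym/negbTE; rewrite -leNgt.
Qed.
End Chamber.

Lemma CS_inj (R : realType) n : injective (@CS R n).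
Proof.
(* A common interior point would have the sign tableaux of both S1 and S2. *)
move=> S1 S2 e; have z1 := @CSo_gen_sum R n S1; set z := \sum_(m < n) _ in z1.
have z2 : CSo S2 z.
  apply: W0_compl_CS_CSo; first exact: ecoef_gt0_W0_compl z1.
  by rewrite -e; exact: CSo_sub_CS.
by apply: plus_sign_inj => i j ij; rewrite (plus_sign_CSo z1 ij) (plus_sign_CSo z2 ij).
Qed.

(** * The chamber containing a point *)

Section ChamberOfPoint.
Variables (R : realType) (n : nat) (x : 'rV[R]_n).
Hypothesis Wx : W0 x.

(* [xs a] is x_(a+1), with the junk value 0 for a >= n. *)
Definition xs (a : nat) : R := oapp (crd x) 0 (insub a).

Lemma xsE (j : 'I_n) : xs j = crd x j.
Proof. by rewrite /xs valK. Qed.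

Lemma xs_nonincr a b : (a <= b < n)%N -> xs b <= xs a.
Proof.
move=> /andP[ab bn]; have an := leq_ltn_trans ab bn.
rewrite -[a]/(val (Ordinal an)) -[b]/(val (Ordinal bn)) !xsE.
move: ab; rewrite leq_eqVlt => /orP[/eqP eab|lt_ab]; last exact/ltW/Wx.
by rewrite (_ : Ordinal an = Ordinal bn) //; exact: val_inj.
Qed.

Definition npos : nat := count (fun a => (a < n)%N && (0 < xs a)) (iota 0 n).

Definition plusb (i a : nat) : bool := [&& (a < n)%N, (i <= a)%N & 0 < xs i + xs a].

Definition aplus (i : nat) : nat := count (plusb i) (iota 0 n).

Lemma npos_le : (npos <= n)%N.
Proof. by rewrite (leq_trans (count_size _ _)) // size_iota. Qed.

Lemma posE a : (a < n)%N && (0 < xs a) = (a < npos)%N.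
Proof.
rewrite (@count_segment (fun a => (a < n)%N && (0 < xs a)) 0 n) ?add0n //.
  by move=> b /andP[].
move=> b c /andP[_ bc] /andP[cn c0]; rewrite (leq_ltn_trans bc cn).
by apply: (lt_le_trans c0); apply: xs_nonincr; rewrite bc cn.
Qed.

Lemma xs_pos i : (i < npos)%N -> 0 < xs i.
Proof. by rewrite -posE => /andP[]. Qed.

Lemma plusbE i : (i < npos)%N -> forall a, plusb i a = (i <= a < i + aplus i)%N.
Proof.
move=> ik; apply: count_segment => [b /and3P[-> -> _] //|b c /andP[ib bc]].
move=> /and3P[cn ic c0]; rewrite /plusb (leq_ltn_trans bc cn) ib /=.
by apply: (lt_le_trans c0); rewrite lerD2l; apply: xs_nonincr; rewrite bc cn.
Qed.

Lemma aplus_bounds i : (i < npos)%N -> (0 < aplus i)%N /\ (i + aplus i <= n)%N.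
Proof.
move=> ik; have in_ : (i < n)%N := leq_trans ik npos_le.
have ai : (0 < aplus i)%N.
  have : plusb i i by rewrite /plusb in_ leqnn /=; have := xs_pos ik; lra.
  by rewrite plusbE // leqnn /= -[X in (X < _)%N]addn0 ltn_add2l.
split=> //; have : plusb i (i + aplus i).-1 by rewrite plusbE //; apply/andP; split; lia.
by move=> /and3P[h _ _]; lia.
Qed.

Lemma aplus_decr i j : (i < j < npos)%N -> (aplus j < aplus i)%N.
Proof.
move=> /andP[ij jk]; have ik := ltn_trans ij jk.
have [aj _] := aplus_bounds jk.
have : plusb j (j + aplus j).-1 by rewrite plusbE //; apply/andP; split; lia.
move=> /and3P[jn _ jj]; have : plusb i (j + aplus j).-1.
  rewrite /plusb jn /=; apply/andP; split; first lia.
  apply: (lt_le_trans jj); rewrite lerD2r; apply: xs_nonincr.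
  by rewrite (ltnW ij) (leq_trans jk npos_le).
by rewrite plusbE // => /andP[_]; lia.
Qed.

Definition aplus_seq : seq nat := map aplus (iota 0 npos).

(* Row i of the sign tableau of x has [aplus i] plus signs. *)
Definition S_of : {set 'I_n} := [set s : 'I_n | (val s).+1 \in aplus_seq].

Lemma aplus_seq_sorted : sorted gtn aplus_seq.
Proof.
apply: (homo_sorted_in (P := fun i => (i < npos)%N)) (iota_ltn_sorted 0 npos).
  by move=> i j _ jk ij; apply: aplus_decr; apply/andP.
by apply/allP => i; rewrite mem_iota.
Qed.

Lemma desc_S_of : desc S_of = aplus_seq.
Proof.
have [srt uq] : sorted geq aplus_seq /\ uniq aplus_seq.
  by have := aplus_seq_sorted; rewrite gtn_sorted_uniq_geq => /andP[].
have hp : perm_eq [seq (val s).+1 | s <- enum S_of] aplus_seq.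
  apply: uniq_perm => //; first by rewrite map_inj_uniq ?enum_uniq // => a b [] /val_inj.
  move=> z; apply/mapP/idP => [[s]|zA]; first by rewrite mem_enum inE => ? ->.
  have /mapP[i] := zA; rewrite mem_iota => /andP[_ ik] zi.
  have [ai ain] := aplus_bounds ik; have zn : (z.-1 < n)%N by lia.
  by exists (Ordinal zn); rewrite /= ?mem_enum ?inE /= prednK // zi.
have geq_trans : transitive geq by move=> a b c ba cb; apply: leq_trans cb ba.
rewrite /desc (perm_sortP _ _ _ _ _ hp) ?sorted_sort //.
- by move=> a b; apply: leq_total.
- by move=> a b /andP[ab ba]; apply/anti_leq/andP.
Qed.

Lemma card_S_of : #|S_of| = npos.
Proof. by rewrite -size_desc desc_S_of size_map size_iota. Qed.

Lemma aS_S_of i : (i < npos)%N -> aS S_of i = aplus i.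
Proof. by move=> ik; rewrite /aS desc_S_of (nth_map 0) ?size_iota // nth_iota. Qed.

Lemma CS_S_of : CS S_of x.
Proof.
have Wcx : Wc x.
  by move=> i j; rewrite leq_eqVlt => /orP[/eqP/val_inj -> //|/Wx/ltW].
split=> // i j ij; rewrite card_S_of; case: (ltnP i npos) => ik /=.
  rewrite aS_S_of // -(andTb (j < _)%N) -ij -plusbE // /plusb ltn_ord ij /= !xsE.
  by case: ifP => [/ltW //|/negbT]; rewrite -leNgt.
have : ~~ ((i < n)%N && (0 < xs i)) by rewrite posE -leqNgt.
rewrite ltn_ord /= -leNgt xsE => xi0.
by have := Wcx _ _ ij; lra.
Qed.
End ChamberOfPoint.

Lemma chamber_CS (R : realType) n (K : set 'rV[R]_n) : is_chamber K -> exists S, K = CS S.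
Proof.
move=> [x xW ->]; have xo : CSo (S_of x) x.
  by apply: W0_compl_CS_CSo => //; exact: CS_S_of (xW.1).
by exists (S_of x); rewrite (component_CSo xo) closure_CSo.
Qed.

Theorem theorem1p16 (R : realType) (n : nat) :
  (* (a) S |-> C(S) is a bijection from subsets of [n] onto the chambers *)
  ((forall S : {set 'I_n}, is_chamber (@CS R n S)) /\
   injective (@CS R n) /\
   (forall K : set 'rV[R]_n, is_chamber K -> exists S, K = @CS R n S)) /\
  (* (b) extreme rays and non-negative spanning *)
  (forall S : {set 'I_n},
     (forall F : set 'rV[R]_n,
        extreme_ray (@CS R n S) F <-> exists l : 'I_n, F = ray (@eS R n S l.+1)) /\
     (@CS R n S = [set x | exists c : 'I_n -> R,
                     (forall l, 0 <= c l) /\ x = \sum_(l < n) c l *: @eS R n S l.+1]) /\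
     (* simplicial: the generators e_1^S,...,e_n^S are linearly independent *)
     (forall c : 'I_n -> R, \sum_(l < n) c l *: @eS R n S l.+1 = 0 -> forall l, c l = 0)).
Proof.
split; last first.
  by move=> S; split; [exact: extreme_ray_CS | split; [exact: CS_cone | exact: gen_free]].
by split; [exact: is_chamber_CS | split; [exact: CS_inj | exact: chamber_CS]].
Qed.
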